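(* Let $F(t)\in\mathbb{Z}[t]$ be squarefree and let $D(t)\in\mathbb{Z}[t]$. Suppose that for all but finitely many integers $n$, the squarefree part of $F(n)$ divides $D(n)$. Then $F(t)$ divides $D(t)$ in $\mathbb{Q}[t]$.
   Context: A polynomial $F(t)\in\mathbb{Z}[t]$ is called squarefree if whenever $F(t)=g(t)^2h(t)$ with $g,h\in\mathbb{Z}[t]$, then $g=\pm1$. The squarefree part of a nonzero integer $m$ is the unique squarefree integer $s$ with $m/s$ a perfect square. *)

From mathcomp Require Import all_boot all_order all_algebra.
Set Implicit Arguments. Unset Strict Implicit. Unset Printing Implicit Defensive.
Import Order.TTheory GRing.Theory Num.Theory.
Local Open Scope ring_scope.

Definition sqfree_poly (F : {poly int}) : Prop :=
  forall g h : {poly int}, F = g ^+ 2 * h -> g = 1 \/ g = -1.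

Definition sqfree_int (s : int) : Prop :=
  s != 0 /\ forall d : int, (d ^+ 2 %| s)%Z -> `|d| = 1.

Definition is_sqfpart (m s : int) : Prop :=
  m != 0 /\ sqfree_int s /\ exists k : int, m = s * k ^+ 2.

From mathcomp Require Import all_boot all_order all_algebra separable.
From mathcomp Require Import ring zify.
From Stdlib Require Import Classical.
Import Order.TTheory GRing.Theory Num.Theory.
Local Open Scope ring_scope.

(* Over Q a squarefree F is separable, so if F does not divide D then
   G = F / gcd(F, D) is nonconstant and coprime to G' D (F / G).  Clearing
   denominators gives m F = G R and an integer identity U G + V G' D R = N.
   By Schur's theorem some prime p not dividing m N divides a value G(a);
   then p divides none of G'(a), D(a), R(a).  Lifting a modulo p^2 yields
   arbitrarily large n with p || F(n) and p not dividing D(n), so p divides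
   the squarefree part of F(n) but not D(n). *)

Local Notation pQ := (map_poly (intr : int -> rat)).

Lemma dvdz_horner_sub (P : {poly int}) (x y : int) : (x - y %| P.[x] - P.[y])%Z.
Proof.
elim/poly_ind: P => [|P c IH]; first by rewrite !horner0 subrr dvdz0.
rewrite !hornerMXaddC.
have -> : P.[x] * x + c - (P.[y] * y + c) = (P.[x] - P.[y]) * x + P.[y] * (x - y)
  by ring.
by apply: rpredD; [apply: dvdz_mulr | apply: dvdz_mull].
Qed.

Lemma dvdz_horner_taylor (P : {poly int}) (x h : int) :
  (h ^+ 2 %| P.[x + h] - P.[x] - h * P^`().[x])%Z.
Proof.
elim/poly_ind: P => [|P c IH].
  by rewrite deriv0 !horner0 !subrr mulr0 subrr dvdz0.
rewrite derivMXaddC !hornerMXaddC hornerD hornerM hornerX.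
have -> : P.[x + h] * (x + h) + c - (P.[x] * x + c) - h * (P.[x] + P^`().[x] * x)
  = (P.[x + h] - P.[x] - h * P^`().[x]) * x + h * (P.[x + h] - P.[x]) by ring.
apply: rpredD; first exact: dvdz_mulr.
rewrite expr2 dvdz_mul //.
by have := dvdz_horner_sub P (x + h) x; rewrite addrAC subrr add0r.
Qed.

Lemma prime_dvdzM (p : nat) (x y : int) : prime p ->
  (p%:Z %| x * y)%Z = (p%:Z %| x)%Z || (p%:Z %| y)%Z.
Proof. by move=> pp; rewrite !dvdzE abszM; apply: Euclid_dvdM. Qed.

Lemma sqfpart_exists {m : int} : m != 0 -> exists s k, sqfree_int s /\ m = s * k ^+ 2.
Proof.
move=> m0; have [N leN] := ubnP `|m|%N; elim: N m leN m0 => [//|N IH m lemN m0].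
have [sm|nsm] := classic (sqfree_int m); first by exists m, 1; rewrite expr1n mulr1.
have [d nsqd] : exists d, ~ ((d ^+ 2 %| m)%Z -> `|d| = 1).
  by apply: not_all_ex_not => sqm; apply: nsm; split.
have [dm nd] := imply_to_and _ _ nsqd.
have [m' em] := dvdzP dm.
have d0 : d != 0 by apply: contra_neq m0 => d0; rewrite em d0 expr0n mulr0.
have m'0 : m' != 0 by apply: contra_neq m0 => m'0; rewrite em m'0 mul0r.
have d2 : (2 <= `|d|)%N.
  have : `|d|%N != 1%N by apply: contra_notN nd => /eqP d1; rewrite -abszE d1.
  by move: d0; rewrite -absz_gt0; lia.
have ltm'N : (`|m'| < N)%N.
  have : `|m|%N = (`|m'| * `|d| ^ 2)%N by rewrite em abszM abszX.
  by move: lemN; rewrite -absz_gt0 in m'0; nia.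
have [s [k [ss ek]]] := IH m' ltm'N m'0.
by exists s, (k * d); split=> //; rewrite em ek; ring.
Qed.

Lemma prime_dvd_sqfpart (p : nat) (m s k : int) : prime p -> m = s * k ^+ 2 ->
  (p%:Z %| m)%Z -> ~~ (p%:Z ^+ 2 %| m)%Z -> (p%:Z %| s)%Z.
Proof.
move=> pp -> pm; apply: contraR => ps; move: pm.
rewrite prime_dvdzM // (negbTE ps) /= expr2 prime_dvdzM // orbb => pk.
by rewrite dvdz_mull // -expr2 dvdz_exp2r.
Qed.

Lemma exists_horner_notin (S : seq int) {P : {poly int}} :
  (1 < size P)%N -> exists y, P.[y] \notin S.
Proof.
move=> sP; pose T := \prod_(s <- S) (P - s%:P).
have T0 : T != 0.
  rewrite prodf_seq_neq0; apply/allP => s _ /=; rewrite subr_eq0.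
  by apply: contraTneq sP => ->; rewrite size_polyC; case: (s != 0).
pose ys := map (fun i : nat => i%:Z) (iota 0 (size T)).
have uys : uniq ys by rewrite map_inj_uniq ?iota_uniq // => i j [].
have : ~~ all (root T) ys.
  apply/negP => rT; have := max_poly_roots T0 rT uys.
  by rewrite size_map size_iota ltnn.
case/allPn => y _; rewrite /root horner_prod prodf_seq_eq0 => /hasPn Ty.
by exists y; apply/negP => /Ty /=; rewrite hornerD hornerN hornerC subrr eqxx.
Qed.

Lemma schur_prime_divisor {Q : {poly int}} {B : int} : B != 0 -> (1 < size Q)%N ->
  exists p a, [/\ prime p, ~~ (p%:Z %| B)%Z & (p%:Z %| Q.[a])%Z].
Proof.
move=> B0 sQ; have [Q0|c0] := eqVneq Q.[0] 0.
  have [p ltBp pp] := prime_above `|B|%N.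
  exists p, p%:Z; split=> //.
    rewrite dvdzE; apply: contraL ltBp => /dvdn_leq.
    by rewrite absz_gt0 B0 -leqNgt => ->.
  by have := dvdz_horner_sub Q p 0; rewrite Q0 !subr0.
set c := Q.[0] in c0 *.
pose L := Q \Po ((c * B) *: 'X).
have sL : (1 < size L)%N.
  by rewrite size_comp_poly2 // size_scale ?size_polyX ?mulf_neq0.
have [y Ly] := exists_horner_notin [:: 0; c; - c] sL.
have [w ew] := dvdzP (dvdz_horner_sub Q (c * B * y) 0).
(* Q(cBy) = c (1 + Bwy), and a prime factor of 1 + Bwy cannot divide B. *)
pose t := 1 + w * B * y.
have Qt : Q.[c * B * y] = c * t by rewrite -(subrK c Q.[_]) ew subr0 /t; ring.
have t1 : (1 < `|t|)%N.
  have : t \notin [:: 0; 1; -1].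
    apply: contra Ly; rewrite horner_comp hornerZ hornerX Qt !inE.
    by case/or3P => /eqP->; rewrite ?mulr0 ?mulr1 ?mulrN1 eqxx ?orbT.
  by rewrite !inE; lia.
have [p pp pt] := pdivP t1.
exists p, (c * B * y); split=> //; last by rewrite Qt dvdz_mull // dvdzE.
apply/negP => pB; have : (p%:Z %| t - w * B * y)%Z.
  by apply: rpredB; [rewrite dvdzE | rewrite dvdz_mulr ?dvdz_mull].
by rewrite /t addrK dvdz1 => /eqP /= p1; rewrite p1 in pp.
Qed.

Lemma exists_congr_notin (S : seq int) (n0 : int) {M : int} :
  M != 0 -> exists j, n0 + M * j \notin S.
Proof.
move=> M0; pose z := \sum_(t <- S) `|t|.
have le_z t : t \in S -> `|t| <= z.
  by move=> tS; rewrite /z (big_rem _ tS) /= lerDl sumr_ge0.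
have z0 : 0 <= z by rewrite sumr_ge0.
have M2 : 0 < M * M by rewrite -expr2 exprn_even_gt0.
exists (M * (z + `|n0| + 1)); apply/negP => /le_z.
by rewrite mulrA; nia.
Qed.

Lemma bezout_horner_ndvd {G W U V : {poly int}} {N d x : int} :
  U * G + V * W = N%:P -> ~~ (d %| N)%Z -> (d %| G.[x])%Z -> ~~ (d %| W.[x])%Z.
Proof.
move=> eB dN dG; apply: contra dN => dW.
have := congr1 (horner^~ x) eB; rewrite /= hornerD !hornerM hornerC => <-.
by rewrite rpredD ?dvdz_mull.
Qed.

Lemma exists_shift_horner_ndvd_sq {G : {poly int}} {p a : int} :
  p != 0 -> ~~ (p %| G^`().[a])%Z -> exists b, ~~ (p ^+ 2 %| G.[a + p * b])%Z.
Proof.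
move=> p0 nG'; have [Ga|Ga] := boolP (p ^+ 2 %| G.[a])%Z; last first.
  by exists 0; rewrite mulr0 addr0.
exists 1; rewrite mulr1; apply: contra nG' => Gap.
rewrite -(dvdz_mul2l p0) -expr2.
have -> : p * G^`().[a] = G.[a + p] - G.[a] - (G.[a + p] - G.[a] - p * G^`().[a])
  by ring.
by apply: rpredB; [apply: rpredB | apply: dvdz_horner_taylor].
Qed.

Lemma exists_sqfpart_ndvd {F D G R U V : {poly int}} {m N : int} (S : seq int) :
  m != 0 -> N != 0 -> m *: F = G * R -> U * G + V * (G^`() * D * R) = N%:P ->
  (1 < size G)%N ->
  exists n s, [/\ n \notin S, is_sqfpart F.[n] s & ~~ (s %| D.[n])%Z].
Proof.
move=> m0 N0 eF eB sG.
have [p [a [pp pmN pGa]]] := schur_prime_divisor (mulf_neq0 m0 N0) sG.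
set P := p%:Z in pmN pGa *.
have P0 : P != 0 by rewrite /P; case: (p) pp.
have [npm npN] : ~~ (P %| m)%Z /\ ~~ (P %| N)%Z.
  by split; apply: contra pmN; [apply: dvdz_mulr | apply: dvdz_mull].
have near_a x : (P %| x - a)%Z ->
    (P %| G.[x])%Z /\ ~~ (P %| G^`().[x] * D.[x] * R.[x])%Z.
  move=> Pxa; have PGx : (P %| G.[x])%Z.
    rewrite -(subrK G.[a] G.[x]) rpredD //.
    exact: dvdz_trans Pxa (dvdz_horner_sub G x a).
  by split=> //; rewrite -!hornerM; apply: bezout_horner_ndvd eB npN PGx.
have [b nP2Gb] : exists b, ~~ (P ^+ 2 %| G.[a + P * b])%Z.
  apply: exists_shift_horner_ndvd_sq P0 _.
  have := near_a a; rewrite subrr dvdz0 => /(_ isT)[_].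
  by rewrite !prime_dvdzM // !negb_or => /andP[/andP[]].
have [j nS] := exists_congr_notin S (a + P * b) (expf_neq0 2 P0).
set n := a + P * b + P ^+ 2 * j in nS.
have Pna : (P %| n - a)%Z.
  by rewrite (_ : n - a = P * (b + P * j)) ?dvdz_mulr // /n; ring.
have [PGn] := near_a n Pna.
rewrite !prime_dvdzM // !negb_or => /andP[/andP[_ nPDn] nPRn].
have nP2Gn : ~~ (P ^+ 2 %| G.[n])%Z.
  apply: contra nP2Gb => P2Gn; rewrite -(subrK G.[n] G.[a + P * b]) rpredD //.
  apply: dvdz_trans (dvdz_horner_sub G (a + P * b) n).
  rewrite (_ : a + P * b - n = P ^+ 2 * - j); first exact: dvdz_mulr.
  by rewrite /n; ring.
have eFn : m * F.[n] = G.[n] * R.[n] by rewrite -hornerM -eF hornerZ.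
have PFn : (P %| F.[n])%Z.
  by move: (dvdz_mulr R.[n] PGn); rewrite -eFn prime_dvdzM // (negbTE npm).
have nP2Fn : ~~ (P ^+ 2 %| F.[n])%Z.
  apply: contra nP2Gn => P2Fn.
  have cPR : coprimez (P ^+ 2) R.[n].
    by apply: coprimezXl; rewrite coprimezE /= prime_coprime.
  by rewrite -(Gauss_dvdzl _ cPR) -eFn dvdz_mull.
have Fn0 : F.[n] != 0 by apply: contraNneq nP2Fn => ->; rewrite dvdz0.
have [s [k [ss eFs]]] := sqfpart_exists Fn0.
exists n, s; split=> //; first by split=> //; split=> //; exists k.
apply: contra nPDn => sDn; apply: dvdz_trans sDn.
exact: prime_dvd_sqfpart eFs PFn nP2Fn.
Qed.

Lemma deriv_neq0 (R : numDomainType) (q : {poly R}) : (1 < size q)%N -> q^`() != 0.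
Proof.
move=> sq; apply/eqP => /(congr1 (fun r : {poly R} => r`_(size q).-2)).
rewrite coef_deriv coef0 (_ : ((size q).-2).+1 = (size q).-1); last by lia.
move/eqP; rewrite mulrn_eq0 -lead_coefE lead_coef_eq0 => /orP[/eqP|/eqP q0].
  by lia.
by move: sq; rewrite q0 size_poly0.
Qed.

Lemma sqfree_poly_rat {F : {poly int}} {q : {poly rat}} :
  sqfree_poly F -> q ^+ 2 %| pQ F -> size q = 1%N.
Proof.
move=> sF; have [Q [a a0 ->]] := rat_poly_scale q.
have a0' : (a%:~R^-1 : rat) != 0 by rewrite invr_eq0 intr_eq0.
(* Gauss's lemma: the primitive part of Q, squared, divides F in Z[t]. *)
rewrite exprZn dvdpZl ?expf_neq0 // -rmorphXn dvdp_rat_int => /dvdpP_int [r er].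
rewrite zprimitiveM -expr2 in er.
rewrite size_scale // size_rat_int_poly -size_zprimitive.
by case: (sF _ _ er) => ->; rewrite ?size_polyN size_poly1.
Qed.

Lemma sqfree_poly_separable {F : {poly int}} : sqfree_poly F -> separable_poly (pQ F).
Proof.
move=> sF; apply/separable_polyP; split; last by move=> u _ /deriv_neq0.
by apply/poly_square_freeP => u; apply: contra_neqN => /(sqfree_poly_rat sF).
Qed.

Section DivGcdp.

Variables (K : fieldType) (p q : {poly K}).

Let c := gcdp p q.
Let g := p %/ c.

Let p_eq : p = g * c.
Proof. by rewrite divpK ?dvdp_gcdl. Qed.

Lemma size_divp_gcdp_gt1 : p != 0 -> ~~ (p %| q) -> (1 < size g)%N.
Proof.
move=> p0 npq; rewrite ltnNge; apply: contra npq => sg.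
have g0 : g != 0 by apply: contra_neq p0 => g0; rewrite p_eq g0 mul0r.
have /size_poly1P[k k0 gk] : size g == 1%N by rewrite eqn_leq sg size_poly_gt0.
by rewrite p_eq gk mul_polyC dvdpZl // dvdp_gcdr.
Qed.

Lemma separable_coprimep_divp_gcdp :
  separable_poly p -> coprimep g (g^`() * q * c).
Proof.
move=> sep_p.
have sep_g : separable_poly g.
  by apply: dvdp_separable sep_p; rewrite [X in _ %| X]p_eq dvdp_mulr.
have cgq : coprimep g q.
  have hc : gcdp g q %| c.
    rewrite dvdp_gcd dvdp_gcdr (dvdp_trans (dvdp_gcdl g q)) //.
    by rewrite [X in _ %| X]p_eq dvdp_mulr.
  have : coprimep g (gcdp g q).
    by apply: separable_coprime sep_p _; rewrite [X in _ %| X]p_eq dvdp_mul.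
  by rewrite !coprimep_def (eqp_size (dvdp_gcd_idr (dvdp_gcdl g q))).
rewrite !coprimepMr cgq andbT.
have -> : coprimep g g^`() by move: sep_g; rewrite unlock.
by apply: separable_coprime sep_p _; rewrite -p_eq.
Qed.

End DivGcdp.

Lemma exists_int_scale (g : {poly rat}) :
  exists2 a : int, a != 0 & exists G, pQ G = a%:~R *: g.
Proof.
have [G [a a0 eG]] := rat_poly_scale g.
by exists a => //; exists G; rewrite eG scalerKV ?intr_eq0.
Qed.

Lemma coprimep_rat_int_bezout {A B : {poly int}} : coprimep (pQ A) (pQ B) ->
  exists U V N, N != 0 /\ U * A + V * B = N%:P.
Proof.
case/Bezout_coprimepP => [[u v]] /=.
rewrite -size_poly_eq1 => /size_poly1P [e e0 ee].
have [a a0 [U eU]] := exists_int_scale u.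
have [b b0 [V eV]] := exists_int_scale v.
pose X := (b *: U) * A + (a *: V) * B.
have eX : pQ X = (a%:~R * b%:~R * e)%:P.
  by rewrite /X rmorphD !rmorphM /= !map_polyZ eU eV -!mul_polyC -ee /=; ring.
have /size_poly1P [N N0 eN] : size X == 1%N.
  by rewrite -size_rat_int_poly eX size_polyC !mulf_neq0 ?intr_eq0.
by exists (b *: U), (a *: V), N.
Qed.

Lemma exists_int_coprime_factor {F D : {poly int}} :
  separable_poly (pQ F) -> ~~ (pQ F %| pQ D) ->
  exists G R U V (m N : int), [/\ m != 0, N != 0, m *: F = G * R,
    U * G + V * (G^`() * D * R) = N%:P & (1 < size G)%N].
Proof.
move=> sepF nFD; set c := gcdp (pQ F) (pQ D); set g := pQ F %/ c.
have [a a0 [G eG]] := exists_int_scale g.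
have [b b0 [R eR]] := exists_int_scale c.
have cGW : coprimep (pQ G) (pQ (G^`() * D * R)).
  rewrite !rmorphM /= -deriv_map eG eR derivZ -!scalerAl -!scalerAr.
  rewrite coprimepZl ?coprimepZr ?intr_eq0 //.
  exact: separable_coprimep_divp_gcdp.
have [U [V [N [N0 eB]]]] := coprimep_rat_int_bezout cGW.
exists G, R, U, V, (a * b), N; split=> //; first exact: mulf_neq0.
  apply: (map_inj_poly (@intr_inj rat) (rmorph0 _)).
  rewrite map_polyZ !rmorphM /= eG eR -scalerAl -scalerAr scalerA.
  by rewrite divpK ?dvdp_gcdl.
rewrite -size_rat_int_poly eG size_scale ?intr_eq0 //.
exact: size_divp_gcdp_gt1 (separable_poly_neq0 sepF) nFD.
Qed.

Theorem lemma5p3 (F D : {poly int}) :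
  sqfree_poly F ->
  (exists S : seq int, forall n : int, n \notin S ->
     forall s : int, is_sqfpart F.[n] s -> (s %| D.[n])%Z) ->
  map_poly (intr : int -> rat) F %| map_poly (intr : int -> rat) D.
Proof.
move=> sF [S HS]; apply/negPn/negP => nFD.
have [G [R [U [V [m [N [m0 N0 eF eB sG]]]]]]] :=
  exists_int_coprime_factor (sqfree_poly_separable sF) nFD.
have [n [s [nS sFn nsD]]] := exists_sqfpart_ndvd S m0 N0 eF eB sG.
by rewrite (HS n nS s sFn) in nsD.
Qed.
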